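(* Consider the iterates $\{x_k,y_k,z_k\}$ of the AdaSMSAG method described in the context, and let $x^*$ be an optimal solution of $\min_{x\in X}\psi(x)$. For $k\ge 0$ let $D_k^2:=\frac{\|x^*-z_k\|^2}{2}$. If, for a given $k\ge 1$, $\alpha_k\beta_k-\theta_k\le 0$, then $$\langle G_k,\;y_k-\alpha_k x^*-(1-\alpha_k)y_{k-1}\rangle\le -\frac{\beta_k}{2}\|y_k-x_k\|^2+\alpha_k\theta_k\left(D_{k-1}^2-D_k^2\right).$$
   Context: Setting: $X\subseteq\mathbb{R}^n$ is a nonempty closed convex set; $\psi=f+h$ where $f(x)=E[F(x,\xi)]$, $h(x)=E[H(x,\xi)]$, $\xi$ a random vector supported on $\Xi\subseteq\mathbb{R}^d$, $F(\cdot,\xi)$ convex with Lipschitz continuous gradient and $H(\cdot,\xi)$ convex (possibly nonsmooth) for every $\xi$. $\{\tilde h_\mu\}_{\mu\in(0,\bar\mu]}$ is a smoothing function of $h$ on $X$ (each $\tilde h_\mu$ continuously differentiable and convex on $X$, $|\tilde h_{\mu_2}(x)-\tilde h_{\mu_1}(x)|\le\kappa|\mu_1-\mu_2|$, $\nabla\tilde h_\mu$ is $L/\mu$-Lipschitz on $X$, and $\tilde h_\mu(z)\to h(x)$ as $z\to x,\mu\downarrow0$), and $\tilde\psi_\mu:=f+\tilde h_\mu$. A stochastic first-order oracle returns, for input $x\in X$, $\mu>0$ and a sample $\xi$, a vector $\nabla\tilde\Psi_\mu(x,\xi)$. AdaSMSAG method: inputs are $N\ge1$, batch sizes $m_k\ge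 1$, $\alpha_k\in(0,1)$, $c>0$, $\mu_0>0$, $\beta_k>0$, $\theta_k>0$, and $z_0=y_0\in X$. For $k=1,\dots,N$: $x_k=\alpha_k z_{k-1}+(1-\alpha_k)y_{k-1}$; $\mu_k=\frac{c\mu_0}{k+c}$; draw samples $\xi_{k,1},\dots,\xi_{k,m_k}$ and set $G_k:=\frac1{m_k}\sum_{i=1}^{m_k}\nabla\tilde\Psi_{\mu_k}(x_k,\xi_{k,i})$; $y_k=\arg\min_{y\in X}\{\langle G_k,y-x_k\rangle+\frac{\beta_k}{2}\|y-x_k\|^2\}$; $z_k=\arg\min_{x\in X}\{\langle G_k,x-x_k\rangle+\frac{\theta_k}{2}\|x-z_{k-1}\|^2\}$. Output $y_N$. *)

From HB Require Import structures.
From mathcomp Require Import all_boot all_order all_algebra.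
From mathcomp Require Import all_classical all_reals all_analysis.
Set Implicit Arguments. Unset Strict Implicit. Unset Printing Implicit Defensive.
Import Order.TTheory GRing.Theory Num.Theory.
Import numFieldNormedType.Exports.
Local Open Scope ring_scope.
Local Open Scope classical_set_scope.

Definition dotv (R : realType) (n : nat) (u v : 'rV[R]_n) : R :=
  \sum_(i < n) u ord0 i * v ord0 i.

Definition sqnorm (R : realType) (n : nat) (u : 'rV[R]_n) : R := dotv u u.

Definition convex_on (R : realType) (n : nat) (X : set 'rV[R]_n)
  (g : 'rV[R]_n -> R) : Prop :=
  forall x y (t : R), X x -> X y -> 0 <= t <= 1 ->
    g (t *: x + (1 - t) *: y) <= t * g x + (1 - t) * g y.

Definition is_argmin (R : realType) (n : nat) (X : set 'rV[R]_n)
  (phi : 'rV[R]_n -> R) (u : 'rV[R]_n) : Prop :=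
  X u /\ forall v, X v -> phi u <= phi v.

Definition batch_grad (R : realType) (n : nat) (Xi : Type)
  (oracle : 'rV[R]_n -> R -> Xi -> 'rV[R]_n) (xk : 'rV[R]_n) (muk : R)
  (mk : nat) (samples : nat -> Xi) : 'rV[R]_n :=
  (mk%:R)^-1 *: \sum_(i < mk) oracle xk muk (samples i).

From HB Require Import structures.
From mathcomp Require Import all_boot all_order all_algebra.
From mathcomp Require Import all_classical all_reals all_analysis.
From mathcomp Require Import ring lra.
Import Order.TTheory GRing.Theory Num.Theory.
Import numFieldNormedType.Exports.
Local Open Scope ring_scope.
Local Open Scope classical_set_scope.
Set Implicit Arguments. Unset Strict Implicit.

(* The [y]-step compares [y_k] with the feasible point
   [alpha_k z_k + (1 - alpha_k) y_{k-1}], which differs from [x_k] by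
   [alpha_k (z_k - z_{k-1})]. The [z]-step gives the three-point inequality
   [<G_k, z_k - x*> <= theta_k/2 (|x* - z_{k-1}|^2 - |x* - z_k|^2 - |z_k - z_{k-1}|^2)].
   Adding [alpha_k] times the latter to the former, the terms in
   [|z_k - z_{k-1}|^2] add up to [alpha_k (alpha_k beta_k - theta_k)/2] times a
   square, which is [<= 0]. *)

Section Dotv.
Variables (R : realType) (n : nat).
Implicit Types (u v w : 'rV[R]_n) (a : R).

Lemma dotvC u v : dotv u v = dotv v u.
Proof. by apply: eq_bigr => i _; rewrite mulrC. Qed.

Lemma dotvDr u v w : dotv w (u + v) = dotv w u + dotv w v.
Proof. by rewrite /dotv -big_split; apply: eq_bigr => i _; rewrite !mxE mulrDr. Qed.

Lemma dotvZr a u w : dotv w (a *: u) = a * dotv w u.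
Proof. by rewrite /dotv mulr_sumr; apply: eq_bigr => i _; rewrite !mxE mulrCA. Qed.

Lemma dotvNr u w : dotv w (- u) = - dotv w u.
Proof. by rewrite -scaleN1r dotvZr mulN1r. Qed.

Lemma dotvBr u v w : dotv w (u - v) = dotv w u - dotv w v.
Proof. by rewrite dotvDr dotvNr. Qed.

Lemma sqnorm_ge0 u : 0 <= sqnorm u.
Proof. by apply: sumr_ge0 => i _; rewrite -expr2 sqr_ge0. Qed.

Lemma sqnormZ a u : sqnorm (a *: u) = a ^+ 2 * sqnorm u.
Proof. by rewrite /sqnorm dotvZr dotvC dotvZr mulrA -expr2. Qed.

Lemma sqnormD u v : sqnorm (u + v) = sqnorm u + 2 * dotv u v + sqnorm v.
Proof.
rewrite /sqnorm !dotvDr ![dotv (u + v) _]dotvC !dotvDr (dotvC v u); ring.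
Qed.

End Dotv.

Lemma convex_set_combination (R : realType) (n : nat) (X : set 'rV[R]_n)
    (a b : 'rV[R]_n) (t : R) :
  convex_set X -> X a -> X b -> 0 <= t <= 1 -> X (t *: a + (1 - t) *: b).
Proof.
move=> cX Xa Xb /andP[t0 t1].
by have := cX a b (Itv01 t0 t1); rewrite !inE => /(_ Xa Xb).
Qed.

Lemma ge0_of_linear_quadratic_ge0 (R : realFieldType) (A B : R) :
  (forall t, 0 < t <= 1 -> 0 <= t * A + t ^+ 2 * B) -> 0 <= A.
Proof.
move=> H; rewrite leNgt; apply/negP => A_lt0.
have [B_le0|B_gt0] := leP B 0; first by have := H 1; rewrite ltr01 lexx; lra.
pose t := - A / (- A + 2 * B).
have tA : t * (- A + 2 * B) = - A by rewrite mulfVK //; lra.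
have t_gt0 : 0 < t by apply: divr_gt0; lra.
have t_le1 : t <= 1 by rewrite ler_pdivrMr; lra.
have /H : 0 < t <= 1 by rewrite t_gt0 t_le1.
by rewrite expr2; nra.
Qed.

Section ProxStep.
Variables (R : realType) (n : nat) (X : set 'rV[R]_n).
Variables (G x0 zp z : 'rV[R]_n) (th : R).
Hypothesis convX : convex_set X.
Hypothesis z_argmin :
  is_argmin X (fun v => dotv G (v - x0) + th / 2 * sqnorm (v - zp)) z.

(* Compare the objective at [z] with its value at [z + t (u - z)] and let [t] tend to 0. *)
Lemma prox_argmin_variational u :
  X u -> 0 <= dotv G (u - z) + th * dotv (z - zp) (u - z).
Proof.
case: z_argmin => Xz zmin Xu.
apply: ge0_of_linear_quadratic_ge0 (th / 2 * sqnorm (u - z)) _ => t /andP[t0 t1].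
have Xzt : X (t *: u + (1 - t) *: z).
  by apply: convex_set_combination => //; rewrite ltW.
have shift w : t *: u + (1 - t) *: z - w = (z - w) + t *: (u - z).
  by apply/rowP => i; rewrite !mxE; ring.
have := zmin _ Xzt.
rewrite !shift (dotvDr (z - x0)) dotvZr (sqnormD (z - zp)) sqnormZ dotvZr.
lra.
Qed.

Lemma prox_three_point u :
  X u -> dotv G (z - u) <= th / 2 * (sqnorm (u - zp) - sqnorm (u - z) - sqnorm (z - zp)).
Proof.
move=> /prox_argmin_variational.
rewrite -[z - u]opprB dotvNr.
have -> : u - zp = (u - z) + (z - zp) by rewrite addrA subrK.
rewrite (sqnormD (u - z) (z - zp)) (dotvC (u - z)).
lra.
Qed.

End ProxStep.
Theorem lemma4 (R : realType) (n : nat) (Xi : Type)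
  (X : set 'rV[R]_n) (f h : 'rV[R]_n -> R)
  (oracle : 'rV[R]_n -> R -> Xi -> 'rV[R]_n)
  (N : nat) (m : nat -> nat) (alpha beta theta : nat -> R) (c mu0 : R)
  (samples : nat -> nat -> Xi)
  (x y z : nat -> 'rV[R]_n) (xstar : 'rV[R]_n) (k : nat) :
  X !=set0 -> closed X -> convex_set X ->
  convex_on X f -> convex_on X h ->
  (1 <= N)%N ->
  (forall j, (1 <= j <= N)%N -> (1 <= m j)%N) ->
  (forall j, (1 <= j <= N)%N -> 0 < alpha j < 1) ->
  0 < c -> 0 < mu0 ->
  (forall j, (1 <= j <= N)%N -> 0 < beta j) ->
  (forall j, (1 <= j <= N)%N -> 0 < theta j) ->
  X (z 0%N) -> y 0%N = z 0%N ->
  (forall j, (1 <= j <= N)%N ->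
     let mu_j := c * mu0 / (j%:R + c) in
     let G_j := batch_grad oracle (x j) mu_j (m j) (samples j) in
     [/\ x j = alpha j *: z j.-1 + (1 - alpha j) *: y j.-1,
         is_argmin X (fun u => dotv G_j (u - x j) + beta j / 2 * sqnorm (u - x j)) (y j)
       & is_argmin X (fun u => dotv G_j (u - x j) + theta j / 2 * sqnorm (u - z j.-1)) (z j)]) ->
  is_argmin X (fun u => f u + h u) xstar ->
  (1 <= k <= N)%N ->
  alpha k * beta k - theta k <= 0 ->
  let mu_k := c * mu0 / (k%:R + c) in
  let G_k := batch_grad oracle (x k) mu_k (m k) (samples k) in
  let D2 := fun j => sqnorm (xstar - z j) / 2 in
  dotv G_k (y k - alpha k *: xstar - (1 - alpha k) *: y k.-1)
    <= - (beta k / 2) * sqnorm (y k - x k) + alpha k * theta k * (D2 k.-1 - D2 k).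
Proof.
move=> _ _ convX _ _ _ _ alpha01 _ _ _ _ Xz0 y0_z0 step [Xxstar _] kN ab_le_theta.
have [x_def [_ y_min] z_min] := step k kN.
cbv zeta; set G := batch_grad _ _ _ _ _ in y_min z_min *.
have Xy_prev : X (y k.-1).
  case: k kN {ab_le_theta x_def G y_min z_min} => [|[|j]] // kN; first by rewrite y0_z0.
  by have [_ [] ] := step j.+1 (ltnW (andP kN).2).
have [alpha_gt0 alpha_lt1] := andP (alpha01 k kN).
have z_step := prox_three_point convX z_min Xxstar.
set d := z k - z k.-1 in z_step.
have y_step : dotv G (y k - x k) + beta k / 2 * sqnorm (y k - x k)
    <= alpha k * dotv G d + beta k / 2 * (alpha k ^+ 2 * sqnorm d).
  rewrite -dotvZr -sqnormZ.
  have -> : alpha k *: d = alpha k *: z k + (1 - alpha k) *: y k.-1 - x k.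
    by rewrite x_def; apply/rowP => i; rewrite !mxE; ring.
  apply: y_min; apply: convex_set_combination => //; first by case: z_min.
  by rewrite !ltW.
have -> : y k - alpha k *: xstar - (1 - alpha k) *: y k.-1
    = (y k - x k) + alpha k *: ((z k - xstar) - d).
  by rewrite x_def; apply/rowP => i; rewrite !mxE; ring.
rewrite dotvDr dotvZr (dotvBr (z k - xstar)).
have := ler_wpM2l (ltW alpha_gt0) z_step.
have : 0 <= alpha k * sqnorm d * (theta k - alpha k * beta k).
  by rewrite mulr_ge0 ?mulr_ge0 ?sqnorm_ge0 ?subr_ge0 ?(ltW alpha_gt0) //; lra.
lra.
Qed.
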